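(* Let $n \ge 2$ and let $K$ be a compact convex subset of $\mathbb{R}^n$ such that, for every unit vector $u$, the projection $\Xi_u$ contains a translate of $K_u$. Then there exists $x \in \mathbb{R}^n$ such that $$K + x \subseteq D \subseteq \tfrac{n}{n-1}\,\Xi.$$
   Context: $e_1,\dots,e_n$ are the standard basis vectors of $\mathbb{R}^n$ and $o$ is the origin. $\Xi$ is the simplex $\mathrm{conv}\{o, e_1, \dots, e_n\}$. $D$ is the convex hull of $\Xi$ and the point $p = (\tfrac{1}{n-1}, \dots, \tfrac{1}{n-1})$; equivalently $D = \{x \in \mathbb{R}^n : x_i \ge 0 \text{ for all } i,\ \sum_{j \ne i} x_j \le 1 \text{ for all } i\}$. For a set $S$ and unit vector $u$, $S_u$ denotes the orthogonal projection of $S$ onto $u^\perp$; ''$A$ contains a translate of $B$'' means $B + w \subseteq A$ for some vector $w$. *)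

From Stdlib Require Import Reals List.
From mathcomp Require Import all_boot.

Set Implicit Arguments.
Unset Strict Implicit.
Unset Printing Implicit Defensive.

Local Open Scope R_scope.

Definition vec (n : nat) := 'I_n -> R.

Definition rsum (m : nat) (F : 'I_m -> R) : R := \big[Rplus/0]_(i < m) F i.

Definition dot (n : nat) (u v : vec n) : R := rsum (fun i => u i * v i).

Definition vadd (n : nat) (x y : vec n) : vec n := fun i => x i + y i.
Definition vscale (n : nat) (c : R) (x : vec n) : vec n := fun i => c * x i.

Definition unit_vec (n : nat) (u : vec n) : Prop := dot u u = 1.

Definition origin (n : nat) : vec n := fun _ => 0.
Definition basis (n : nat) (k : 'I_n) : vec n :=
  fun i => if i == k then 1 else 0.

Definition conv_fam (n m : nat) (P : 'I_m -> vec n) (x : vec n) : Prop :=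
  exists lam : 'I_m -> R,
    (forall j, 0 <= lam j) /\ rsum lam = 1 /\
    forall i, x i = rsum (fun j => lam j * P j i).

(* the points o, e_1, ..., e_n indexed by 'I_n.+1 (index 0 is o) *)
Definition simplex_pts (n : nat) (j : 'I_n.+1) : vec n :=
  match unlift ord0 j with
  | None => @origin n
  | Some k => @basis n k
  end.

Definition Xi (n : nat) (x : vec n) : Prop := conv_fam (@simplex_pts n) x.

(* D = conv(Xi ∪ {p}), given by its inequality description *)
Definition Dset (n : nat) (x : vec n) : Prop :=
  (forall i, 0 <= x i) /\
  (forall i, rsum (fun j => if j == i then 0 else x j) <= 1).

Definition dilate (n : nat) (c : R) (S : vec n -> Prop) (y : vec n) : Prop :=
  exists x, S x /\ y = vscale c x.

Definition translate (n : nat) (S : vec n -> Prop) (w : vec n) (y : vec n) : Prop :=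
  exists x, S x /\ y = vadd x w.

Definition set_sub (n : nat) (A B : vec n -> Prop) : Prop := forall x, A x -> B x.

Definition contains_translate (n : nat) (A B : vec n -> Prop) : Prop :=
  exists w, set_sub (translate B w) A.

Definition proj_pt (n : nat) (u x : vec n) : vec n :=
  fun i => x i - dot x u * u i.
Definition proj_set (n : nat) (S : vec n -> Prop) (u : vec n) (y : vec n) : Prop :=
  exists x, S x /\ y = proj_pt u x.

Definition convex (n : nat) (K : vec n -> Prop) : Prop :=
  forall x y t, K x -> K y -> 0 <= t <= 1 ->
    K (vadd (vscale t x) (vscale (1 - t) y)).

Definition dist2 (n : nat) (x y : vec n) : R := rsum (fun i => (x i - y i) * (x i - y i)).
Definition open_set (n : nat) (U : vec n -> Prop) : Prop :=
  forall x, U x -> exists eps, 0 < eps /\ forall y, dist2 x y < eps * eps -> U y.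

Definition compact_set (n : nat) (K : vec n -> Prop) : Prop :=
  forall (I : Type) (U : I -> vec n -> Prop),
    (forall i, open_set (U i)) ->
    (forall x, K x -> exists i, U i x) ->
    exists l : list I, forall x, K x -> exists i, List.In i l /\ U i x.

(* Only the n coordinate directions u = e_i are needed.  Projecting along e_i just erases coordinate
   i, so the hypothesis for e_i yields a vector w_i with k_j + w_i j >= 0 for
   j <> i and sum_(j <> i) (k_j + w_i j) <= 1 for all k in K ("facet fit").
   Since n >= 2, every coordinate is bounded below on K; translating K by
   x_j = - inf_K k_j makes K nonnegative, and x_j <= w_i j for j <> i then
   gives the facet inequalities of D.  The inclusion D in n/(n-1) Xi follows
   by summing the n facet inequalities: (n-1) sum x <= n. *)
From HB Require Import structures.
From Stdlib Require Import Reals Lra FunctionalExtensionality Classical.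
From mathcomp Require Import all_boot.

Set Implicit Arguments.
Unset Strict Implicit.
Local Open Scope R_scope.

Lemma RplusA : associative Rplus. Proof. by move=> *; rewrite Rplus_assoc. Qed.
HB.instance Definition _ := Monoid.isComLaw.Build R 0 Rplus RplusA Rplus_comm Rplus_0_l.

Lemma rsum_le m (F G : 'I_m -> R) : (forall i, F i <= G i) -> rsum F <= rsum G.
Proof.
move=> FG; apply: (big_ind2 (fun a b => a <= b)) => [|*|i _]; [lra|lra|exact: FG].
Qed.

Lemma rsumD m (F G : 'I_m -> R) : rsum (fun i => F i + G i) = rsum F + rsum G.
Proof. by rewrite /rsum big_split. Qed.

Lemma rsumN m (F : 'I_m -> R) : rsum (fun i => - F i) = - rsum F.
Proof.
rewrite /rsum; symmetry; apply: (big_morph Ropp); last by rewrite Ropp_0.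
by move=> a b; rewrite Ropp_plus_distr.
Qed.

Lemma rsumZ m c (F : 'I_m -> R) : rsum (fun i => c * F i) = c * rsum F.
Proof.
rewrite /rsum; symmetry; apply: (big_morph (fun s => c * s)); last by rewrite Rmult_0_r.
by move=> a b; rewrite Rmult_plus_distr_l.
Qed.

Lemma rsum_const m c : rsum (fun _ : 'I_m => c) = INR m * c.
Proof.
rewrite /rsum big_const_ord; elim: m => [|m IH] /=; first lra.
by rewrite IH; case: m {IH} => /= [|m]; lra.
Qed.

Lemma rsum_delta m (i : 'I_m) (F : 'I_m -> R) :
  rsum (fun j => if j == i then F j else 0) = F i.
Proof.
rewrite /rsum (bigD1 i) //= eqxx big1; first lra.
by move=> j /negbTE ->.
Qed.

Lemma rsum_out m (i : 'I_m) (F : 'I_m -> R) :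
  rsum (fun j => if j == i then 0 else F j) = rsum F - F i.
Proof.
have := rsumD (fun j => if j == i then 0 else F j) (fun j => if j == i then F j else 0).
rewrite rsum_delta.
have -> : (fun j => (if j == i then 0 else F j) + (if j == i then F j else 0)) = F.
  by apply: functional_extensionality => j; case: (j == i); lra.
move=> ->; lra.
Qed.

Lemma Xi_coord n (lam : 'I_n.+1 -> R) i :
  rsum (fun j => lam j * simplex_pts j i) = lam (lift ord0 i).
Proof.
rewrite /rsum big_ord_recl /simplex_pts unlift_none /origin Rmult_0_r Rplus_0_l.
rewrite -[RHS](rsum_delta i (fun k => lam (lift ord0 k))).
apply: eq_bigr => k _; rewrite liftK /basis eq_sym; case: (k == i); lra.
Qed.

Lemma Xi_char n (z : vec n) : Xi z <-> (forall j, 0 <= z j) /\ rsum z <= 1.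
Proof.
split.
  move=> [lam [lam_ge0 [lam_sum1 z_comb]]].
  have -> : z = fun k => lam (lift ord0 k).
    by apply: functional_extensionality => k; rewrite z_comb Xi_coord.
  split=> [j|]; first exact: lam_ge0.
  move: lam_sum1; rewrite /rsum big_ord_recl => lam_sum1.
  have := lam_ge0 ord0; rewrite /rsum; lra.
move=> [z_ge0 z_sum].
exists (fun l => if unlift ord0 l is Some k then z k else 1 - rsum z).
split; [|split].
- by move=> l; case: (unlift ord0 l) => [k|]; [exact: z_ge0 | lra].
- rewrite {1}/rsum big_ord_recl unlift_none.
  rewrite (eq_bigr (fun k => z k)) => [|k _]; last by rewrite liftK.
  rewrite -/(rsum z); lra.
- by move=> i; rewrite Xi_coord liftK.
Qed.

(* D lies in n/(n-1) Xi: summing the n facet inequalities of D bounds the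
   coordinate sum by n/(n-1). *)
Lemma D_sub_dilate_Xi n (Hn : (2 <= n)%nat) :
  set_sub (@Dset n) (dilate (Rdiv (INR n) (Rminus (INR n) 1)) (@Xi n)).
Proof.
move=> x [x_ge0 x_facet].
have n_ge2 : 2 <= INR n by apply: (le_INR 2); apply/leP.
have sum_bound : (INR n - 1) * rsum x <= INR n.
  have := rsum_le x_facet; rewrite rsum_const.
  have -> : (fun i => rsum (fun j => if j == i then 0 else x j)) =
            (fun i => rsum x + - x i).
    by apply: functional_extensionality => i; rewrite rsum_out.
  rewrite rsumD rsumN rsum_const; lra.
exists (fun j => (INR n - 1) / INR n * x j); split.
  apply/Xi_char; split.
    move=> j; apply: Rmult_le_pos; last exact: x_ge0.
    apply: Rle_mult_inv_pos; lra.
  rewrite rsumZ; apply: (Rmult_le_reg_l (INR n)); first lra.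
  field_simplify; lra.
by apply: functional_extensionality => j; rewrite /vscale; field; lra.
Qed.

Lemma proj_basis_coord n (k : vec n) i j :
  proj_pt (basis i) k j = if j == i then 0 else k j.
Proof.
have dot_ki : dot k (basis i) = k i.
  rewrite /dot -[RHS](rsum_delta i k); apply: eq_bigr => l _.
  by rewrite /basis; case: (l == i); lra.
by rewrite /proj_pt dot_ki /basis; case: eqP => [->|_]; lra.
Qed.

Lemma basis_unit n (i : 'I_n) : unit_vec (basis i).
Proof.
rewrite /unit_vec /dot -[RHS](rsum_delta i (fun _ => 1)); apply: eq_bigr => j _.
by rewrite /basis; case: (j == i); lra.
Qed.

(* [w] fits K into the facet of Xi opposite to e_i after translation: the
   coordinates other than i of k + w form a point of the (n-1)-simplex. *)
Definition facet_fit n (i : 'I_n) (K : vec n -> Prop) (w : vec n) : Prop :=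
  forall k, K k -> (forall j, j != i -> 0 <= k j + w j) /\
    rsum (fun j => if j == i then 0 else k j + w j) <= 1.

Lemma proj_basis_facet_fit n (i : 'I_n) (K : vec n -> Prop) w :
  set_sub (translate (proj_set K (basis i)) w) (proj_set (@Xi n) (basis i)) ->
  facet_fit i K w.
Proof.
move=> fit k Kk.
have [z [Xz Ez]] : proj_set (@Xi n) (basis i) (vadd (proj_pt (basis i) k) w).
  by apply: fit; exists (proj_pt (basis i) k); split=> //; exists k.
have kw_z : forall j, j != i -> k j + w j = z j.
  move=> j ji; have := f_equal (fun f => f j) Ez; rewrite /vadd /= !proj_basis_coord.
  by rewrite (negbTE ji); lra.
move/Xi_char: Xz => [z_ge0 z_sum]; split=> [j ji|]; first by rewrite kw_z.
apply: Rle_trans z_sum; apply: rsum_le => j.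
by case: eqP => [_|/eqP ji]; [exact: z_ge0 | rewrite kw_z //; lra].
Qed.

Lemma coord_inf n (K : vec n -> Prop) (j : 'I_n) :
  (exists k, K k) -> (exists b, forall k, K k -> b <= k j) ->
  {m | (forall k, K k -> m <= k j) /\
       forall b, (forall k, K k -> b <= k j) -> b <= m}.
Proof.
move=> nonempty bounded.
pose E r := exists k, K k /\ r = - k j.
have [M [M_ub M_least]] : {M | is_lub E M}.
  apply: completeness.
    have [b b_low] := bounded.
    by exists (- b) => r [k [Kk ->]]; have := b_low k Kk; lra.
  by have [k Kk] := nonempty; exists (- k j), k.
exists (- M); split=> [k Kk | b' b'_low].
  by have := M_ub (- k j) (ex_intro _ k (conj Kk erefl)); lra.
suff : M <= - b' by lra.
by apply: M_least => r [k [Kk ->]]; have := b'_low k Kk; lra.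
Qed.

(* For n >= 2 every index has a different one; this is why each coordinate
   is bounded below on K by some facet fit. *)
Lemma other_index n (Hn : (2 <= n)%nat) (j : 'I_n) : exists i : 'I_n, i != j.
Proof.
have lt0n : (0 < n)%nat by apply: leq_trans Hn.
case: (eqVneq (Ordinal lt0n) j) => [e|ne]; last by exists (Ordinal lt0n).
by exists (Ordinal Hn); rewrite -e.
Qed.

(* If K admits a facet fit for every i (and n >= 2), then translating K by
   minus its coordinatewise infimum puts it inside D. *)
Lemma translate_into_D n (Hn : (2 <= n)%nat) (K : vec n -> Prop) :
  (forall i, exists w, facet_fit i K w) ->
  exists x, set_sub (translate K x) (@Dset n).
Proof.
move=> fits.
have [nonempty | empty] := classic (exists k, K k); last first.
  by exists (@origin n) => y [k [Kk _]]; case: empty; exists k.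
have low_bound : forall i j (w : vec n), facet_fit i K w -> j != i ->
    forall k, K k -> - w j <= k j.
  by move=> i j w fit ji k Kk; have [fit_ge0 _] := fit k Kk; have := fit_ge0 j ji; lra.
have inf : forall j, {m | (forall k, K k -> m <= k j) /\
                          forall b, (forall k, K k -> b <= k j) -> b <= m}.
  move=> j; apply: coord_inf => //.
  have [i ij] := other_index Hn j; have [w fit] := fits i.
  by exists (- w j); apply: low_bound fit _; rewrite eq_sym.
exists (fun j => - sval (inf j)) => y [k [Kk ->]]; split=> [j | i].
  by have := proj1 (svalP (inf j)) k Kk; rewrite /vadd; lra.
have [w fit] := fits i; have [_ fit_sum] := fit k Kk.
apply: Rle_trans fit_sum; apply: rsum_le => j; rewrite /vadd.
case: eqP => [_|/eqP ji]; first lra.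
suff : - w j <= sval (inf j) by lra.
exact: (proj2 (svalP (inf j)) _ (low_bound i j w fit ji)).
Qed.

Theorem theorem4p1 (n : nat) (Hn : (2 <= n)%nat) (K : vec n -> Prop) :
  compact_set K -> convex K ->
  (forall u : vec n, unit_vec u ->
     contains_translate (proj_set (@Xi n) u) (proj_set K u)) ->
  exists x : vec n,
    set_sub (translate K x) (@Dset n) /\
    set_sub (@Dset n) (dilate (Rdiv (INR n) (Rminus (INR n) 1)) (@Xi n)).
Proof.
move=> _ _ proj_fit.
have fits : forall i, exists w, facet_fit i K w.
  move=> i; have [w fit] := proj_fit _ (basis_unit i).
  by exists w; apply: proj_basis_facet_fit.
have [x Kx_in_D] := translate_into_D Hn fits.
by exists x; split; last exact: D_sub_dilate_Xi.
Qed.
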